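(* Let $\mathcal{C}$ be a d-category and $f:Y\to X$ a map of $\mathcal{C}$-presheaves. The following are equivalent: (1) $f$ is future open; (2) for every path $\alpha:\mathcal I\to\mathsf{E}X$ and every element $y$ of $Y$ with $\mathsf{E}(f)(y)=\alpha(\bot_{\mathcal I})$ there is a path $\beta:\mathcal I\to\mathsf{E}Y$ with $\beta(\bot_{\mathcal I})=y$ and $\mathsf{E}(f)\circ\beta=\alpha$; (3) for every track object $\Gamma$, every presheaf map $\boldsymbol\alpha:\Gamma\to X$ and every $y\in Y[\mathrm{src}\Gamma]$ with $f(y)=\boldsymbol\alpha(\bot_\Gamma)$ there is a presheaf map $\boldsymbol\beta:\Gamma\to Y$ with $\boldsymbol\beta(\bot_\Gamma)=y$ and $f\circ\boldsymbol\beta=\boldsymbol\alpha$; (4) for all track objects $\Gamma,\Delta$ with $\mathrm{tgt}\Gamma=\mathrm{src}\Delta$, letting $j:\Gamma\to\Gamma*\Delta$ be the canonical map, for all presheaf maps $\boldsymbol\gamma:\Gamma\to Y$ and $\boldsymbol\alpha:\Gamma*\Delta\to X$ with $\boldsymbol\alpha\circ j=f\circ\boldsymbol\gamma$ there is $\boldsymbol\beta:\Gamma*\Delta\to Y$ with $\boldsymbol\beta\circ j=\boldsymbol\gamma$ and $f\circ\boldsymbol\beta=\boldsymbol\alpha$.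
   Context: A d-category is a small category $\mathcal{C}$ with wide subcategories $\mathcal{C}^+$ (formorphisms) and $\mathcal{C}^-$ (backmorphisms) such that an invertible $\varphi$ is in $\mathcal{C}^+$ iff $\varphi^{-1}\in\mathcal{C}^-$; d-functors preserve both. A $\mathcal{C}$-presheaf is a functor $X:\mathcal{C}^{op}\to\mathbf{Set}$; $\mathsf{E}X$ is its category of elements (objects $(U,x)$, $x\in X[U]$; morphisms $(V,y)\to(U,x)$ the $\varphi:V\to U$ with $X[\varphi](x)=y$), a d-category where a morphism is a for-/backmorphism iff its image in $\mathcal{C}$ is; $\mathsf{E}(f)(U,y)=(U,f(y))$. A map $f:Y\to X$ is future open if for every $\varphi\in\mathcal{C}^+(V,U)$, $y\in Y[V]$, $x\in X[U]$ with $X[\varphi](x)=f(y)$ there is $\bar y\in Y[U]$ with $Y[\varphi](\bar y)=y$ and $f(\bar y)=x$. A linear category is a bipointed d-category isomorphic to a finite (possibly empty) concatenation (gluing $\top$ to $\bot$) of $\mathbf S$ (formorphism $\bot\to\top$), $\mathbf T$ (backmorphism $\top\to\bot$), $\mathbf I$ (inverse pair); a path in a d-category $\mathcal D$ is a d-functor from a linear category to $\mathcal D$. The track object of a path $\omega:\mathcal I\to\mathcal{C}$ is $\operatorname{colim}_i\mathcal{C}(-,\omega(i))$ with single start element $\bot$ the image of $\mathrm{id}_{\omega(\bot)}$ (over $\mathrm{src}=\omega(\bot)$) and single accept element $\top$ the image of $\mathrm{id}_{\omega(\top)}$ (over $\mathrm{tgt}=\omega(\top)$); a track object is such an object up to isomorphism.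 For track objects with $\mathrm{tgt}\Gamma=\mathrm{src}\Delta=U$, $\Gamma*\Delta$ is the pushout of $\Gamma\xleftarrow{\top_\Gamma}\mathcal{C}(-,U)\xrightarrow{\bot_\Delta}\Delta$ (elements viewed as maps from representables via Yoneda), with start element from $\Gamma$ and accept from $\Delta$. *)

From Stdlib Require Import ProofIrrelevance.
From mathcomp Require Import all_boot.
From mathcomp Require Import zify.

Set Implicit Arguments.
Unset Strict Implicit.
Unset Printing Implicit Defensive.

Record cat := Cat {
  ob : Type;
  hom : ob -> ob -> Type;
  idm : forall a, hom a a;
  comp : forall a b c, hom b c -> hom a b -> hom a c;
  comp_idl : forall a b (m : hom a b), comp (idm b) m = m;
  comp_idr : forall a b (m : hom a b), comp m (idm a) = m;
  comp_assoc : forall a b c d (h : hom c d) (g : hom b c) (f : hom a b),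
      comp h (comp g f) = comp (comp h g) f }.
Arguments hom : clear implicits.
Arguments idm {_} _.
Arguments comp {_ _ _ _} _ _.

Record dcat := DCat {
  dc :> cat;
  fwd : forall a b, hom dc a b -> Prop;
  bwd : forall a b, hom dc a b -> Prop;
  fwd_id : forall a, fwd (idm a);
  bwd_id : forall a, bwd (idm a);
  fwd_comp : forall a b c (g : hom dc b c) (f : hom dc a b),
      fwd g -> fwd f -> fwd (comp g f);
  bwd_comp : forall a b c (g : hom dc b c) (f : hom dc a b),
      bwd g -> bwd f -> bwd (comp g f);
  fwd_bwd_inv : forall a b (phi : hom dc a b) (psi : hom dc b a),
      comp psi phi = idm a -> comp phi psi = idm b -> (fwd phi <-> bwd psi) }.
Arguments fwd {_ _ _} _.
Arguments bwd {_ _ _} _.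

Record dfunctor (A B : dcat) := DFun {
  fo : ob A -> ob B;
  fm : forall a b, hom A a b -> hom B (fo a) (fo b);
  fm_id : forall a, fm (idm a) = idm (fo a);
  fm_comp : forall a b c (g : hom A b c) (f : hom A a b),
      fm (comp g f) = comp (fm g) (fm f);
  fm_fwd : forall a b (m : hom A a b), fwd m -> fwd (fm m);
  fm_bwd : forall a b (m : hom A a b), bwd m -> bwd (fm m) }.
Arguments fo {_ _} _ _.
Arguments fm {_ _} _ {_ _} _.

Definition dcomp (A B D : dcat) (F : dfunctor A B) (G : dfunctor B D) :
  dfunctor A D.
Proof.
refine (@DFun A D (fun a => fo G (fo F a)) (fun a b m => fm G (fm F m))
          _ _ _ _).
- by move=> a; rewrite !fm_id.
- by move=> a b c g f; rewrite !fm_comp.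
- by move=> a b m Hm; apply: fm_fwd; apply: fm_fwd.
- by move=> a b m Hm; apply: fm_bwd; apply: fm_bwd.
Defined.

Definition hom_cast (B : cat) (x x' y y' : ob B) (ex : x = x') (ey : y = y')
  (m : hom B x y) : hom B x' y' :=
  match ex in _ = x1, ey in _ = y1 return hom B x1 y1 with
  | erefl, erefl => m end.

Definition dfun_eq (A B : dcat) (F G : dfunctor A B) : Prop :=
  exists e : (forall a, fo F a = fo G a),
    forall a b (m : hom A a b), fm G m = hom_cast (e a) (e b) (fm F m).

Inductive letter := LS | LT | LI.

(* The concatenation  w_0 * w_1 * ... * w_{n-1}  (gluing top to bottom)
   has objects 0..n (object k is the top of block k-1 = bottom of block k),
   bottom = 0, top = n.  It is a thin category: there is exactly one
   morphism i -> j iff either i <= j and no block in [i,j) is T, or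
   j <= i and no block in [j,i) is S.  Formorphisms are the i -> j with
   i <= j, backmorphisms those with j <= i. *)
Definition lhom (w : seq letter) (i j : 'I_(size w).+1) : Prop :=
  forall k : nat,
    ((i <= k < j)%N -> nth LS w k <> LT) /\ ((j <= k < i)%N -> nth LS w k <> LS).

Lemma lhom_id w (i : 'I_(size w).+1) : lhom i i.
Proof. by move=> k; split=> /andP[h1 h2]; lia. Qed.

Lemma lhom_comp w (i j l : 'I_(size w).+1) : lhom j l -> lhom i j -> lhom i l.
Proof.
move=> g f k; split=> /andP[h1 h2].
- case: (ltnP k j) => hj.
  + by apply: (f k).1; apply/andP; split.
  + by apply: (g k).1; apply/andP; split.
- case: (ltnP k j) => hj.
  + by apply: (g k).2; apply/andP; split.
  + by apply: (f k).2; apply/andP; split.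
Qed.

Definition lincat (w : seq letter) : cat.
Proof.
refine (@Cat 'I_(size w).+1 (@lhom w) (@lhom_id w)
          (fun a b c g f => lhom_comp g f) _ _ _);
  by intros; apply: proof_irrelevance.
Defined.

Definition ldcat (w : seq letter) : dcat.
Proof.
refine (@DCat (lincat w) (fun a b _ => (nat_of_ord a <= nat_of_ord b)%N)
          (fun a b _ => (nat_of_ord b <= nat_of_ord a)%N) _ _ _ _ _).
- by move=> a /=.
- by move=> a /=.
- by move=> a b c _ _ /= h1 h2; apply: leq_trans h2 h1.
- by move=> a b c _ _ /= h1 h2; apply: leq_trans h1 h2.
- by move=> a b _ _ _ _ /=.
Defined.

(* a path in a d-category D is a d-functor  ldcat w -> D  for some word w;
   its start is at ord0 (= bottom) and its end at ord_max (= top) *)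

Record presheaf (C : cat) := Presheaf {
  pob :> ob C -> Type;
  pact : forall V U, hom C V U -> pob U -> pob V;
  pact_id : forall U (x : pob U), pact (idm U) x = x;
  pact_comp : forall W V U (psi : hom C W V) (phi : hom C V U) (x : pob U),
      pact (comp phi psi) x = pact psi (pact phi x) }.
Arguments pact {_} _ {_ _} _ _.

Record ntrans (C : cat) (X Y : presheaf C) := NTrans {
  nt :> forall U, X U -> Y U;
  nt_nat : forall V U (phi : hom C V U) (x : X U),
      nt (pact X phi x) = pact Y phi (nt x) }.

Definition rep (C : cat) (U : ob C) : presheaf C.
Proof.
refine (@Presheaf C (fun V => hom C V U) (fun V W phi psi => comp psi phi) _ _).
- by move=> W psi; apply: comp_idr.
- by move=> W V W' psi phi x; apply: comp_assoc.
Defined.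

Definition future_open (C : dcat) (Y X : presheaf C) (f : ntrans Y X) : Prop :=
  forall V U (phi : hom C V U), fwd phi ->
  forall (y : Y V) (x : X U), pact X phi x = f V y ->
  exists ybar : Y U, pact Y phi ybar = y /\ f U ybar = x.

Definition elt (C : cat) (X : presheaf C) := {U : ob C & X U}.

Definition elhom (C : cat) (X : presheaf C) (a b : elt X) :=
  {phi : hom C (projT1 a) (projT1 b) | pact X phi (projT2 b) = projT2 a}.

Lemma sig_eqP (A : Type) (P : A -> Prop) (x y : {a | P a}) :
  proj1_sig x = proj1_sig y -> x = y.
Proof.
case: x => a pa; case: y => b pb /= e; subst b.
by rewrite (proof_irrelevance _ pa pb).
Qed.

Definition elcomp (C : cat) (X : presheaf C) (a b c : elt X)
  (g : elhom b c) (f : elhom a b) : elhom a c.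
Proof.
exists (comp (proj1_sig g) (proj1_sig f)).
by move: g f => [g eg] [f ef] /=; rewrite pact_comp eg ef.
Defined.

Definition elcat (C : cat) (X : presheaf C) : cat.
Proof.
refine (@Cat (elt X) (@elhom C X)
  (fun a => exist _ (idm (projT1 a)) (@pact_id _ X _ (projT2 a)))
  (@elcomp C X) _ _ _).
- by move=> a b m; apply: sig_eqP; apply: comp_idl.
- by move=> a b m; apply: sig_eqP; apply: comp_idr.
- by move=> a b c d h g f; apply: sig_eqP; apply: comp_assoc.
Defined.

Definition E (C : dcat) (X : presheaf C) : dcat.
Proof.
refine (@DCat (elcat X) (fun a b m => fwd (proj1_sig m))
                        (fun a b m => bwd (proj1_sig m)) _ _ _ _ _).
- by move=> a /=; apply: fwd_id.
- by move=> a /=; apply: bwd_id.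
- by move=> a b c g f /= h1 h2; apply: fwd_comp.
- by move=> a b c g f /= h1 h2; apply: bwd_comp.
- move=> a b phi psi /= e1 e2; apply: fwd_bwd_inv.
  + by have := f_equal (@proj1_sig _ _) e1.
  + by have := f_equal (@proj1_sig _ _) e2.
Defined.

Definition Ef_ob (C : cat) (Y X : presheaf C) (f : ntrans Y X) (a : elt Y) :
  elt X := existT _ (projT1 a) (f _ (projT2 a)).

Definition Ef_hom (C : cat) (Y X : presheaf C) (f : ntrans Y X) (a b : elt Y)
  (m : elhom a b) : elhom (Ef_ob f a) (Ef_ob f b).
Proof.
exists (proj1_sig m).
by move: m => [m em] /=; rewrite -nt_nat em.
Defined.

Definition Ef (C : dcat) (Y X : presheaf C) (f : ntrans Y X) :
  dfunctor (E Y) (E X).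
Proof.
refine (@DFun (E Y) (E X) (Ef_ob f) (@Ef_hom C Y X f) _ _ _ _).
- by move=> a; apply: sig_eqP.
- by move=> a b c g h; apply: sig_eqP.
- by move=> a b m.
- by move=> a b m.
Defined.

Definition is_cocone (C : dcat) (w : seq letter) (omega : dfunctor (ldcat w) C)
  (G : presheaf C) (c : forall i, ntrans (rep (fo omega i)) G) : Prop :=
  forall (i j : ob (ldcat w)) (m : hom (ldcat w) i j) V
         (phi : hom C V (fo omega i)),
    c j V (comp (fm omega m) phi) = c i V phi.

Definition is_colimit (C : dcat) (w : seq letter) (omega : dfunctor (ldcat w) C)
  (G : presheaf C) (c : forall i, ntrans (rep (fo omega i)) G) : Prop :=
  forall (Q : presheaf C) (d : forall i, ntrans (rep (fo omega i)) Q),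
    is_cocone d ->
    exists u : ntrans G Q,
      (forall i V phi, u V (c i V phi) = d i V phi) /\
      (forall u' : ntrans G Q, (forall i V phi, u' V (c i V phi) = d i V phi) ->
         forall V x, u' V x = u V x).

(* (G, bot, top) is a track object with src = s, tgt = t: G is (isomorphic
   to, i.e. is) a colimit of C(-,omega(i)) for some path omega, bot is the
   image of id_{omega(bottom)} and top that of id_{omega(top)}. *)
Definition track_object (C : dcat) (G : presheaf C) (s t : ob C)
  (bot : G s) (top : G t) : Prop :=
  exists (w : seq letter) (omega : dfunctor (ldcat w) C)
         (c : forall i, ntrans (rep (fo omega i)) G),
    is_cocone c /\ is_colimit c /\
    existT (fun U => G U) s bot =
      existT (fun U => G U) (fo omega ord0) (c ord0 _ (idm (fo omega ord0))) /\
    existT (fun U => G U) t top =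
      existT (fun U => G U) (fo omega ord_max) (c ord_max _ (idm (fo omega ord_max))).

(* P with j : G -> P, k : D -> P is a pushout of
   G <-(top)- C(-,U) -(bot)-> D, elements viewed as maps via Yoneda *)
Definition is_pushout (C : cat) (G D P : presheaf C) (U : ob C)
  (top : G U) (bot : D U) (j : ntrans G P) (k : ntrans D P) : Prop :=
  (forall V (phi : hom C V U), j V (pact G phi top) = k V (pact D phi bot)) /\
  forall (Q : presheaf C) (g : ntrans G Q) (h : ntrans D Q),
    (forall V (phi : hom C V U), g V (pact G phi top) = h V (pact D phi bot)) ->
    exists u : ntrans P Q,
      (forall V x, u V (j V x) = g V x) /\ (forall V x, u V (k V x) = h V x) /\
      (forall u' : ntrans P Q,
          (forall V x, u' V (j V x) = g V x) -> (forall V x, u' V (k V x) = h V x) ->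
          forall V x, u' V x = u V x).

Arguments track_object {C} G s t bot top.

(* Along a path, an edge that is
   not a formorphism S has a morphism going back, and restriction along it
   lifts the edge for free; so a lift can be propagated vertex by vertex along
   any path, which gives (2).  A lift of the compatible family of elements
   alpha(c_i(id)) of X along the path defining a track object Gamma is a
   cocone into Y, hence a map Gamma -> Y, which gives (3); for (4), lift on
   Delta and glue with gamma by the pushout property.  Conversely each of (2),
   (3), (4) applied to the one-edge path of a formorphism phi : V -> U (whose
   track object is the representable C(-,U)) is exactly future openness. *)

From Pilot Require Import Defs.
From mathcomp Require Import all_boot zify.
From Stdlib Require Import ProofIrrelevance.

Set Implicit Arguments.
Unset Strict Implicit.
Unset Printing Implicit Defensive.

Section LinearCategory.
Variable w : seq letter.
Implicit Types i j l : 'I_(size w).+1.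

Lemma lhom_irr i j (m m' : hom (ldcat w) i j) : m = m'.
Proof. exact: (proof_irrelevance (lhom i j)). Qed.

Lemma lhom_between i l j :
  (i <= l <= j)%N || (j <= l <= i)%N -> lhom i j -> lhom i l /\ lhom l j.
Proof.
move=> hl m; case/orP: hl => /andP[hil hlj]; split=> k; split=> /andP[h1 h2];
  solve [lia | apply: (m k).1; lia | apply: (m k).2; lia].
Qed.

Lemma lhom_succ_fwd i j : j = i.+1 :> nat -> lhom i j <-> nth LS w i <> LT.
Proof.
move=> ej; split=> [m | nT k]; first by apply: (m i).1; lia.
by split=> /andP[h1 h2]; [have -> : k = i by lia | lia].
Qed.

Lemma lhom_succ_bwd i j : j = i.+1 :> nat -> lhom j i <-> nth LS w i <> LS.
Proof.
move=> ej; split=> [m | nS k]; first by apply: (m i).2; lia.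
by split=> /andP[h1 h2]; [lia | have -> : k = i by lia].
Qed.

End LinearCategory.

Section PathLifting.
Variables (C : dcat) (Y X : presheaf C) (f : ntrans Y X).
Hypothesis f_open : future_open f.
Variables (w : seq letter) (omega : dfunctor (ldcat w) C)
          (x : forall i, X (fo omega i)).
Hypothesis x_compat : forall (i j : ob (ldcat w)) (m : hom (ldcat w) i j),
  pact X (fm omega m) (x j) = x i.
Variable y0 : Y (fo omega ord0).
Hypothesis f_y0 : f _ y0 = x ord0.

Local Notation n := (size w).

Lemma fm_idm (i : 'I_n.+1) (m : hom (ldcat w) i i) : fm omega m = idm _.
Proof. by rewrite (lhom_irr m (idm (i : ob (ldcat w)))) fm_id. Qed.

Lemma lift_step (K K1 : 'I_n.+1) (yK : Y (fo omega K)) :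
  K1 = K.+1 :> nat -> f _ yK = x K ->
  exists y1 : Y (fo omega K1), [/\ f _ y1 = x K1,
    forall m : hom (ldcat w) K1 K, pact Y (fm omega m) yK = y1 &
    forall m : hom (ldcat w) K K1, pact Y (fm omega m) y1 = yK].
Proof.
move=> eK1 f_yK.
(* Unless block K is S there is a morphism K1 -> K and restriction along it
   is the lift; for S, future openness lifts the formorphism K -> K1. *)
have [m0 | eS] : lhom K1 K \/ nth LS w K = LS.
  by case eS: (nth LS w K); [right | left; apply/(lhom_succ_bwd eK1); rewrite eS..].
- exists (pact Y (fm omega (m0 : hom (ldcat w) K1 K)) yK); split.
  + by rewrite nt_nat f_yK x_compat.
  + by move=> m; rewrite (lhom_irr m m0).
  + by move=> m; rewrite -pact_comp -fm_comp fm_idm pact_id.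
- have no_back : ~ lhom K1 K by move/(lhom_succ_bwd eK1).
  have m0 : hom (ldcat w) K K1 by apply/(lhom_succ_fwd eK1); rewrite eS.
  have fwd_m0 : fwd (fm omega m0) by apply: fm_fwd => /=; lia.
  have [y1 [act_y1 f_y1]] := f_open fwd_m0 (etrans (x_compat m0) (esym f_yK)).
  exists y1; split=> [|m|m]; [done | by case: (no_back m) | by rewrite (lhom_irr m m0)].
Qed.

Definition partial_lift (k : nat) (yk : forall i : 'I_n.+1, (i <= k)%N -> Y (fo omega i)) :=
  [/\ forall i h, f _ (yk i h) = x i, forall h, yk ord0 h = y0 &
      forall (i j : 'I_n.+1) h h' (m : hom (ldcat w) i j),
        pact Y (fm omega m) (yk j h') = yk i h].
Arguments partial_lift : clear implicits.

Lemma partial_lift0 : exists yk, partial_lift 0 yk.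
Proof.
have only0 (i : 'I_n.+1) (h : (i <= 0)%N) : i = ord0 by apply/val_inj => /=; lia.
exists (fun i h => eq_rect ord0 (fun z => Y (fo omega z)) y0 i (esym (only0 i h))).
have cast_id (e : ord0 = ord0) : eq_rect ord0 (fun z => Y (fo omega z)) y0 ord0 e = y0.
  by rewrite (proof_irrelevance _ e erefl).
split=> [i h | h | i j h h' m].
- by move: (h); rewrite (only0 i h) => h0; rewrite cast_id.
- exact: cast_id.
- move: (h) (h') m; rewrite (only0 i h) (only0 j h') => h0 h0' m.
  by rewrite fm_idm pact_id !cast_id.
Qed.

Section Extension.
Variables (k : nat) (yk : forall i : 'I_n.+1, (i <= k)%N -> Y (fo omega i)).
Arguments yk : clear implicits.
Variables (K1 : 'I_n.+1) (eK1 : K1 = k.+1 :> nat) (y1 : Y (fo omega K1)).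

Lemma succ_ord_eq (i : 'I_n.+1) : (i <= k.+1)%N -> (k < i)%N -> K1 = i.
Proof. by move=> h1 h2; apply/val_inj => /=; lia. Qed.

Definition extend_lift (i : 'I_n.+1) (h : (i <= k.+1)%N) : Y (fo omega i) :=
  match leqP i k with
  | LeqNotGtn hle => yk i hle
  | GtnNotLeq hgt => eq_rect K1 (fun z => Y (fo omega z)) y1 i (succ_ord_eq h hgt)
  end.

Lemma extend_lift_old (i : 'I_n.+1) h (h' : (i <= k)%N) : extend_lift h = yk i h'.
Proof.
rewrite /extend_lift; case: (leqP i k) => [hle | hgt]; last by lia.
by rewrite (proof_irrelevance _ hle h').
Qed.

Lemma extend_lift_new h : extend_lift (i := K1) h = y1.
Proof.
rewrite /extend_lift; case: (leqP K1 k) => [hle | hgt]; first by lia.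
by rewrite (proof_irrelevance _ (succ_ord_eq _ _) erefl).
Qed.

End Extension.
Arguments extend_lift_old {k yk K1 eK1 y1 i h}.
Arguments extend_lift_new {k yk K1 eK1 y1 h}.

Lemma partial_lift_succ k : (k < n)%N ->
  (exists yk, partial_lift k yk) -> exists yk, partial_lift k.+1 yk.
Proof.
move=> lt_kn [yk [f_yk yk0 yk_compat]].
have lt_k : (k < n.+1)%N by lia.
have lt_k1 : (k.+1 < n.+1)%N by lia.
pose K : 'I_n.+1 := Ordinal lt_k; pose K1 : 'I_n.+1 := Ordinal lt_k1.
have [y1 [f_y1 y1_back y1_fwd]] :=
  lift_step (erefl : K1 = K.+1 :> nat) (f_yk K (leqnn k)).
have eK1 : K1 = k.+1 :> nat by [].
have is_K1 (i : 'I_n.+1) : (i <= k.+1)%N -> (k < i)%N -> i = K1.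
  by move=> h1 h2; apply/val_inj => /=; lia.
exists (extend_lift yk eK1 y1); split=> [i h | h | i j h h' m].
- case: (leqP i k) => [hi | hi]; first by rewrite (extend_lift_old hi).
  by have ei := is_K1 i h hi; subst i; rewrite extend_lift_new.
- by rewrite (extend_lift_old (i := ord0) (leq0n k)).
- case: (leqP i k) => [hi | hi]; case: (leqP j k) => [hj | hj].
  + by rewrite !(extend_lift_old hi, extend_lift_old hj).
  + have ej := is_K1 j h' hj; subst j.
    have [mi mK] : lhom i K /\ lhom K K1 by apply: lhom_between m; rewrite /= hi leqnSn.
    rewrite (lhom_irr m (Defs.comp (mK : hom (ldcat w) K K1) mi)) fm_comp pact_comp.
    by rewrite extend_lift_new y1_fwd (extend_lift_old hi).
  + have ei := is_K1 i h hi; subst i.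
    have [mK mj] : lhom K1 K /\ lhom K j by apply: lhom_between m; rewrite /= hj leqnSn orbT.
    rewrite (lhom_irr m (Defs.comp (mj : hom (ldcat w) K j) mK)) fm_comp pact_comp.
    by rewrite (extend_lift_old hj) (yk_compat K j (leqnn k)) extend_lift_new y1_back.
  + have ei := is_K1 i h hi; have ej := is_K1 j h' hj; subst i j.
    by rewrite fm_idm pact_id !extend_lift_new.
Qed.

Lemma path_lift : exists yy : forall i, Y (fo omega i),
  [/\ forall (i j : ob (ldcat w)) (m : hom (ldcat w) i j),
        pact Y (fm omega m) (yy j) = yy i,
      forall i, f _ (yy i) = x i & yy ord0 = y0].
Proof.
have lifts k : (k <= n)%N -> exists yk, partial_lift k yk.
  elim: k => [_ | k IH lt_kn]; first exact: partial_lift0.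
  by apply: partial_lift_succ => //; apply: IH; lia.
have [yn [f_yn yn0 yn_compat]] := lifts n (leqnn n).
by exists (fun i => yn i (leq_ord i)); split=> // i j m; apply: yn_compat.
Qed.

End PathLifting.

Section Presheaves.
Variable C : Defs.cat.

Definition yon (Z : presheaf C) U (z : Z U) : ntrans (rep U) Z.
Proof.
refine (@NTrans C (rep U) Z (fun V psi => pact Z psi z) _).
by move=> V W phi psi /=; rewrite pact_comp.
Defined.

Definition ncomp (A B D : presheaf C) (g : ntrans B D) (h : ntrans A B) : ntrans A D.
Proof.
refine (@NTrans C A D (fun V a => g V (h V a)) _).
by move=> V U phi a; rewrite !nt_nat.
Defined.

Definition nid (Z : presheaf C) : ntrans Z Z :=
  @NTrans C Z Z (fun V z => z) (fun _ _ _ _ => erefl).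

Lemma pushout_ext (G D P : presheaf C) U (top : G U) (bot : D U)
    (j : ntrans G P) (k : ntrans D P) :
  is_pushout top bot j k -> forall (Q : presheaf C) (u u' : ntrans P Q),
  (forall V z, u V (j V z) = u' V (j V z)) -> (forall V z, u V (k V z) = u' V (k V z)) ->
  forall V z, u V z = u' V z.
Proof.
move=> [square univ] Q u u' ej ek.
have square_u : forall V (phi : hom C V U),
    ncomp u j V (pact G phi top) = ncomp u k V (pact D phi bot).
  by move=> V phi /=; rewrite square.
have [v [_ [_ v_uniq]]] := univ Q _ _ square_u.
by move=> V z; rewrite (v_uniq u) // (v_uniq u') // => W a /=; rewrite ?ej ?ek.
Qed.

Lemma rep_pushout V U (phi : hom C V U) :
  is_pushout (G := rep V) (D := rep U) (idm V) phi (yon (Z := rep U) phi) (nid (rep U)).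
Proof.
split=> [W p | Q g h gh]; first by rewrite /= comp_idl.
exists h; split=> [W p | ]; last by split=> // u' _ u'_h W z; rewrite -u'_h.
by have := gh W p; rewrite /= comp_idl => ->.
Qed.

End Presheaves.

Section Colimits.
Variables (C : dcat) (w : seq letter) (omega : dfunctor (ldcat w) C).

Lemma yon_cocone (Z : presheaf C) (z : forall i, Z (fo omega i)) :
  (forall (i j : ob (ldcat w)) (m : hom (ldcat w) i j), pact Z (fm omega m) (z j) = z i) ->
  is_cocone (fun i => yon (z i)).
Proof. by move=> z_compat i j m V phi /=; rewrite pact_comp z_compat. Qed.

Lemma colimit_ext (G : presheaf C) (c : forall i, ntrans (rep (fo omega i)) G) :
  is_cocone c -> is_colimit c -> forall (Q : presheaf C) (u u' : ntrans G Q),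
  (forall i V phi, u V (c i V phi) = u' V (c i V phi)) -> forall V z, u V z = u' V z.
Proof.
move=> cc cl Q u u' e.
have ccu : is_cocone (fun i => ncomp u (c i)) by move=> i j m V phi /=; rewrite cc.
have [v [_ v_uniq]] := cl Q _ ccu.
by move=> V z; rewrite (v_uniq u) // (v_uniq u') // => i W phi /=; rewrite e.
Qed.

End Colimits.

Lemma lhomLS_le (i j : 'I_2) : @lhom [:: LS] i j -> (i <= j)%N.
Proof.
move=> m; case: (leqP i j) => // lt_ji; exfalso; apply: ((m 0%N).2 _ erefl).
by case: i j lt_ji {m} => [[|[|?]] ?] [[|?] ?].
Qed.

Lemma lhomLS_to_end (i : 'I_2) : @lhom [:: LS] i ord_max.
Proof.
move=> k; split=> /andP[]; first by case: k.
by case: i => [[|[|?]] ?] /= *; lia.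
Qed.

Section ArrowPath.
Variables (D : dcat) (a b : ob D) (phi : hom D a b).
Hypothesis fwd_phi : fwd phi.

Definition arrow_ob (n : nat) : ob D := if n is 0 then a else b.

Definition arrow_hom (n k : nat) : (n <= k)%N -> hom D (arrow_ob n) (arrow_ob k) :=
  match n, k return (n <= k)%N -> hom D (arrow_ob n) (arrow_ob k) with
  | 0, 0 => fun _ => idm a
  | 0, _.+1 => fun _ => phi
  | _.+1, _.+1 => fun _ => idm b
  | _.+1, 0 => fun le_n0 => False_rect _ (Bool.diff_false_true le_n0)
  end.

Lemma arrow_hom_id n (h : (n <= n)%N) : arrow_hom h = idm _.
Proof. by case: n h. Qed.

Lemma arrow_hom_comp n k l (h : (n <= l)%N) (hkl : (k <= l)%N) (hnk : (n <= k)%N) :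
  arrow_hom h = Defs.comp (arrow_hom hkl) (arrow_hom hnk).
Proof.
by case: n h hnk => [|n] h hnk; case: k hkl hnk => [|k] hkl hnk //=;
  case: l h hkl => [|l] h hkl //=; rewrite ?comp_idl ?comp_idr.
Qed.

Definition arrow_path : dfunctor (ldcat [:: LS]) D.
Proof.
refine (@DFun (ldcat [:: LS]) D (fun i => arrow_ob i)
  (fun i j m => arrow_hom (lhomLS_le m)) _ _ _ _).
- by move=> i; apply: arrow_hom_id.
- by move=> i j k g h; apply: arrow_hom_comp.
- move=> i j m _ /=; case: (nat_of_ord i) (nat_of_ord j) (lhomLS_le m) => [|n] [|l] //= _;
    exact: fwd_id.
- move=> i j m /= le_ji; move: (lhomLS_le m).
  have -> : nat_of_ord i = j by apply/eqP; rewrite eqn_leq lhomLS_le.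
  by move=> h; rewrite arrow_hom_id; apply: bwd_id.
Defined.

End ArrowPath.

Section TrackObjects.
Variable C : dcat.

Section RepresentableAtEnd.
Variables (w : seq letter) (omega : dfunctor (ldcat w) C).
Hypothesis to_end : forall i : ob (ldcat w), hom (ldcat w) i ord_max.

Definition to_end_cocone (i : ob (ldcat w)) :
  ntrans (rep (fo omega i)) (rep (fo omega ord_max)) :=
  yon (Z := rep (fo omega ord_max)) (fm omega (to_end i)).

Lemma track_object_rep_end :
  track_object (rep (fo omega ord_max)) (fo omega ord0) (fo omega ord_max)
    (to_end_cocone ord0 _ (idm _)) (to_end_cocone ord_max _ (idm _)).
Proof.
have cc : is_cocone to_end_cocone.
  move=> i j m V p /=; rewrite comp_assoc -fm_comp.
  by rewrite (lhom_irr (Defs.comp (to_end j) m) (to_end i)).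
exists w, omega, to_end_cocone; split=> //; split=> //.
move=> Q d dc; exists (d ord_max); split=> [i V p | u' u'_d V z].
- by rewrite -(dc i ord_max (to_end i) V p).
- by rewrite -u'_d /= (lhom_irr (to_end ord_max) (idm _)) fm_id comp_idl.
Qed.

End RepresentableAtEnd.

Lemma track_object_rep (V U : ob C) (phi : hom C V U) :
  fwd phi -> track_object (rep U) V U phi (idm U).
Proof.
move=> fwd_phi.
have := track_object_rep_end (arrow_path fwd_phi) lhomLS_to_end.
by rewrite /= !comp_idr.
Qed.

End TrackObjects.

Section ElementPaths.
Variables (C : dcat) (Y : presheaf C).

Definition elt_proj : dfunctor (E Y) C.
Proof.
refine (@DFun (E Y) C (fun a => projT1 a) (fun a b m => proj1_sig m) _ _ _ _) => //.
Defined.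

Definition elt_path (w : seq letter) (omega : dfunctor (ldcat w) C)
    (yy : forall i, Y (fo omega i))
    (yy_compat : forall (i j : ob (ldcat w)) (m : hom (ldcat w) i j),
       pact Y (fm omega m) (yy j) = yy i) : dfunctor (ldcat w) (E Y).
Proof.
refine (@DFun (ldcat w) (E Y) (fun i => existT (fun U => Y U) (fo omega i) (yy i))
   (fun i j m => exist _ (fm omega m) (yy_compat i j m)) _ _ _ _).
- by move=> i; apply: sig_eqP; rewrite /= fm_id.
- by move=> i j k g h; apply: sig_eqP; rewrite /= fm_comp.
- exact: fm_fwd.
- exact: fm_bwd.
Defined.

End ElementPaths.

Lemma hom_cast_refl (B : Defs.cat) (a b : ob B) (ea : a = a) (eb : b = b) (m : hom B a b) :
  hom_cast ea eb m = m.
Proof. by rewrite (proof_irrelevance _ ea erefl) (proof_irrelevance _ eb erefl). Qed.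

Lemma proj1_sig_hom_cast (C : Defs.cat) (X : presheaf C) (a a' b b' : elt X)
    (ea : a = a') (eb : b = b') (m : elhom a b) :
  proj1_sig (@hom_cast (elcat X) a a' b b' ea eb m) =
  hom_cast (f_equal (@projT1 _ _) ea) (f_equal (@projT1 _ _) eb) (proj1_sig m).
Proof. by case: a' / ea; case: b' / eb. Qed.

Section Equivalences.
Variables (C : dcat) (Y X : presheaf C) (f : ntrans Y X).

Definition path_lifting :=
  forall (w : seq letter) (alpha : dfunctor (ldcat w) (E X)) (y : ob (E Y)),
    fo (Ef f) y = fo alpha ord0 ->
    exists beta : dfunctor (ldcat w) (E Y),
      fo beta ord0 = y /\ dfun_eq (dcomp beta (Ef f)) alpha.

Definition track_lifting :=
  forall (G : presheaf C) (s t : ob C) (bot : G s) (top : G t),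
    track_object G s t bot top ->
    forall (alpha : ntrans G X) (y : Y s), f s y = alpha s bot ->
    exists beta : ntrans G Y,
      beta s bot = y /\ (forall V x, f V (beta V x) = alpha V x).

Definition track_extension :=
  forall (G D : presheaf C) (s U t : ob C)
         (botG : G s) (topG : G U) (botD : D U) (topD : D t),
    track_object G s U botG topG -> track_object D U t botD topD ->
    forall (GD : presheaf C) (j : ntrans G GD) (k : ntrans D GD),
      is_pushout topG botD j k ->
    forall (gamma : ntrans G Y) (alpha : ntrans GD X),
      (forall V x, alpha V (j V x) = f V (gamma V x)) ->
    exists beta : ntrans GD Y,
      (forall V x, beta V (j V x) = gamma V x) /\
      (forall V x, f V (beta V x) = alpha V x).

Lemma Ef_ob_fiber (a : elt X) (b : elt Y) : Ef_ob f b = a ->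
  exists2 y : Y (projT1 a), f _ y = projT2 a & existT _ (projT1 a) y = b.
Proof. by move=> <-; exists (projT2 b); case: b. Qed.

Lemma future_open_path_lifting : future_open f -> path_lifting.
Proof.
move=> f_open w alpha y0 /Ef_ob_fiber[y f_y <-].
pose x i : X (fo (dcomp alpha (elt_proj X)) i) := projT2 (fo alpha i).
have x_compat (i j : ob (ldcat w)) (m : hom (ldcat w) i j) :
    pact X (fm (dcomp alpha (elt_proj X)) m) (x j) = x i.
  exact: (proj2_sig (fm alpha m)).
have [yy [yy_compat f_yy yy0]] := path_lift f_open x_compat f_y.
exists (elt_path yy_compat); split; first by rewrite /= yy0.
have e a : fo (dcomp (elt_path yy_compat) (Ef f)) a = fo alpha a.
  by rewrite /= /Ef_ob /= f_yy /x; case: (fo alpha a).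
by exists e => a b m; apply: sig_eqP; rewrite proj1_sig_hom_cast hom_cast_refl.
Qed.

Lemma lift_of_elhom (b0 b1 : elt Y) (bm : elhom b0 b1) V U (phi : hom C V U)
    (y : Y V) (x : X U) (e0 : projT1 b0 = V) (e1 : Ef_ob f b1 = existT _ U x) :
  b0 = existT _ V y -> phi = hom_cast e0 (f_equal (@projT1 _ _) e1) (proj1_sig bm) ->
  exists ybar : Y U, pact Y phi ybar = y /\ f U ybar = x.
Proof.
move=> b0_eq; subst b0; case: b1 bm e1 => U1 y1 [psi psi_y] e1 /=.
move: (f_equal _ e1) => /= eU; subst U.
rewrite !hom_cast_refl => ->.
by exists y1; split=> //; apply: (inj_pair2 _ _ _ _ _ e1).
Qed.

Lemma path_lifting_future_open : path_lifting -> future_open f.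
Proof.
move=> lifting V U phi fwd_phi y x f_y.
pose edge : elhom (existT _ V (f V y) : elt X) (existT _ U x) := exist _ phi f_y.
have fwd_edge : @fwd (E X) _ _ edge by [].
have [beta [beta0 [e beta_over]]] :=
  lifting [:: LS] (arrow_path fwd_edge) (existT _ V y) erefl.
have over_edge := f_equal (@proj1_sig _ _) (beta_over ord0 ord_max (lhomLS_to_end ord0)).
rewrite proj1_sig_hom_cast in over_edge.
exact: (lift_of_elhom beta0 over_edge).
Qed.

Lemma lift_of_rep_map V U (phi : hom C V U) (y : Y V) (x : X U) (beta : ntrans (rep U) Y) :
  beta V phi = y -> (forall W (p : hom C W U), f W (beta W p) = pact X p x) ->
  exists ybar : Y U, pact Y phi ybar = y /\ f U ybar = x.
Proof.
move=> beta_phi f_beta; exists (beta U (idm U)).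
by rewrite f_beta pact_id -nt_nat /= comp_idl.
Qed.

Lemma track_lifting_future_open : track_lifting -> future_open f.
Proof.
move=> lifting V U phi fwd_phi y x f_y.
have [beta [beta_phi f_beta]] :=
  lifting _ _ _ _ _ (track_object_rep fwd_phi) (yon x) y (esym f_y).
exact: lift_of_rep_map beta_phi f_beta.
Qed.

Lemma track_extension_future_open : track_extension -> future_open f.
Proof.
move=> extension V U phi fwd_phi y x f_y.
have square : forall W (p : rep V W),
    yon x W (yon (Z := rep U) phi W p) = f W (yon y W p).
  by move=> W p /=; rewrite pact_comp f_y nt_nat.
have [beta [beta_j f_beta]] :=
  extension _ _ _ _ _ _ _ _ _ (track_object_rep (fwd_id V)) (track_object_rep fwd_phi)
    _ _ _ (rep_pushout phi) (yon y) (yon x) square.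
apply: (lift_of_rep_map (beta := beta)) f_beta.
by have := beta_j V (idm V); rewrite /= comp_idr pact_id.
Qed.

Lemma future_open_track_lifting : future_open f -> track_lifting.
Proof.
move=> f_open G s t bot top [w [omega [c [cc [cl [bot_eq _]]]]]] alpha y f_y.
have es := f_equal (@projT1 _ _) bot_eq; simpl in es; subst s.
have eb := inj_pair2 _ _ _ _ _ bot_eq; subst bot.
pose x i := alpha _ (c i _ (idm (fo omega i))).
have x_compat (i j : ob (ldcat w)) (m : hom (ldcat w) i j) :
    pact X (fm omega m) (x j) = x i.
  by rewrite /x -!nt_nat /= comp_idl -(comp_idr (fm omega m)) cc.
have [yy [yy_compat f_yy yy0]] := path_lift f_open x_compat f_y.
have [beta [beta_c _]] := cl Y _ (yon_cocone yy_compat).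
exists beta; split; first by rewrite beta_c /= pact_id.
move=> V z; apply: (colimit_ext cc cl (u := ncomp f beta)) => i W phi /=.
by rewrite beta_c /= nt_nat f_yy /x -!nt_nat /= comp_idl.
Qed.

Lemma track_lifting_track_extension : track_lifting -> track_extension.
Proof.
move=> lifting G D s U t botG topG botD topD _ trackD GD j k po gamma alpha alpha_j.
have [square univ] := po.
have f_top : f U (gamma U topG) = ncomp alpha k U botD.
  by have := square U (idm U); rewrite !pact_id /= -alpha_j => ->.
have [betaD [betaD_bot f_betaD]] := lifting _ _ _ _ _ trackD (ncomp alpha k) _ f_top.
have gamma_betaD : forall V (p : hom C V U),
    gamma V (pact G p topG) = betaD V (pact D p botD).
  by move=> V p; rewrite !nt_nat betaD_bot.
have [beta [beta_j [beta_k _]]] := univ Y gamma betaD gamma_betaD.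
exists beta; split=> //.
move=> V z; apply: (pushout_ext po (u := ncomp f beta)) => W a /=.
- by rewrite beta_j alpha_j.
- by rewrite beta_k f_betaD.
Qed.

End Equivalences.

Unset Implicit Arguments.

Theorem lemma12 (C : dcat) (Y X : presheaf C) (f : ntrans Y X) :
  let P1 := future_open f in
  let P2 :=
    forall (w : seq letter) (alpha : dfunctor (ldcat w) (E X)) (y : ob (E Y)),
      fo (Ef f) y = fo alpha ord0 ->
      exists beta : dfunctor (ldcat w) (E Y),
        fo beta ord0 = y /\ dfun_eq (dcomp beta (Ef f)) alpha in
  let P3 :=
    forall (G : presheaf C) (s t : ob C) (bot : G s) (top : G t),
      track_object G s t bot top ->
      forall (alpha : ntrans G X) (y : Y s), f s y = alpha s bot ->
      exists beta : ntrans G Y,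
        beta s bot = y /\ (forall V x, f V (beta V x) = alpha V x) in
  let P4 :=
    forall (G D : presheaf C) (s U t : ob C)
           (botG : G s) (topG : G U) (botD : D U) (topD : D t),
      track_object G s U botG topG -> track_object D U t botD topD ->
      forall (GD : presheaf C) (j : ntrans G GD) (k : ntrans D GD),
        is_pushout topG botD j k ->
      forall (gamma : ntrans G Y) (alpha : ntrans GD X),
        (forall V x, alpha V (j V x) = f V (gamma V x)) ->
      exists beta : ntrans GD Y,
        (forall V x, beta V (j V x) = gamma V x) /\
        (forall V x, f V (beta V x) = alpha V x) in
  (P1 <-> P2) /\ (P1 <-> P3) /\ (P1 <-> P4).
Proof.
move=> P1 P2 P3 P4; split; [|split]; split.
- exact: future_open_path_lifting.
- exact: path_lifting_future_open.
- exact: future_open_track_lifting.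
- exact: track_lifting_future_open.
- by move=> f_open; apply/track_lifting_track_extension/future_open_track_lifting.
- exact: track_extension_future_open.
Qed.
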